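(* Let $A=\{(x_k,y_k):k\in[\ell]\}\subset\mathbb N^d$, $d=m+n$. Then for all $\bar k\in[\ell]$, $$\mathbb D_{\mathrm{in}}(x_{\bar k},y_{\bar k},T_F(A))\in\mathbb N\quad\text{and}\quad\mathbb D_{\mathrm{out}}(x_{\bar k},y_{\bar k},T_F(A))\in\mathbb N.$$
   Context: $\mathbb N$ is the set of non-negative integers; $[\ell]=\{1,\dots,\ell\}$; $K=\mathbb{R}_+^m\times(-\mathbb{R}_+^n)$. The free disposal hull (FDH) technology is $T_F(A)=(A+K)\cap\mathbb{R}_+^d$. Translation distance functions: $\mathbb D_{\mathrm{in}}(x,y,T)=\sup\{\delta\in\mathbb{R}:(x-\delta1\!\!1_m,y)\in T\}$, $\mathbb D_{\mathrm{out}}(x,y,T)=\sup\{\delta\in\mathbb{R}:(x,y+\delta1\!\!1_n)\in T\}$, where $1\!\!1$ denotes a vector of ones. *)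

From HB Require Import structures.
From mathcomp Require Import all_boot all_order all_algebra.
From mathcomp Require Import all_classical all_reals all_analysis.
Set Implicit Arguments. Unset Strict Implicit. Unset Printing Implicit Defensive.
Import Order.TTheory GRing.Theory Num.Theory.
Local Open Scope classical_set_scope.
Local Open Scope ring_scope.

(* A point of R^d, d = m + n, is a pair (x, y) of an input vector x : 'I_m -> R
   and an output vector y : 'I_n -> R. *)
Definition nonnegv (R : realType) (k : nat) (v : 'I_k -> R) : Prop :=
  forall i, 0 <= v i.

(* Free disposal hull T_F(A) = (A + K) ∩ R_+^d, K = R_+^m × (-R_+^n). *)
Definition FDH (R : realType) (m n : nat)
    (A : set (('I_m -> R) * ('I_n -> R))) : set (('I_m -> R) * ('I_n -> R)) :=
  [set p | (exists a, A a /\ exists (u : 'I_m -> R) (v : 'I_n -> R),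
              nonnegv u /\ nonnegv v /\
              p = ((fun i => a.1 i + u i), (fun j => a.2 j - v j)))
           /\ nonnegv p.1 /\ nonnegv p.2].

Definition D_in (R : realType) (m n : nat) (x : 'I_m -> R) (y : 'I_n -> R)
    (T : set (('I_m -> R) * ('I_n -> R))) : \bar R :=
  ereal_sup ((fun d : R => d%:E) @` [set d : R | T ((fun i => x i - d), y)]).

Definition D_out (R : realType) (m n : nat) (x : 'I_m -> R) (y : 'I_n -> R)
    (T : set (('I_m -> R) * ('I_n -> R))) : \bar R :=
  ereal_sup ((fun d : R => d%:E) @` [set d : R | T (x, (fun j => y j + d))]).

(* The finite data set A = {(x_k, y_k) : k in [l]} ⊂ N^d, embedded in R^d. *)
Definition ptx (R : realType) (l m : nat) (X : 'I_l -> 'I_m -> nat) (k : 'I_l)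
  : 'I_m -> R := fun i => (X k i)%:R.
Definition pty (R : realType) (l n : nat) (Y : 'I_l -> 'I_n -> nat) (k : 'I_l)
  : 'I_n -> R := fun j => (Y k j)%:R.
Definition dataset (R : realType) (l m n : nat)
    (X : 'I_l -> 'I_m -> nat) (Y : 'I_l -> 'I_n -> nat)
  : set (('I_m -> R) * ('I_n -> R)) :=
  [set p | exists k, p = (ptx R X k, pty R Y k)].
Arguments ptx R {l m} X k.
Arguments pty R {l n} Y k.
Arguments dataset R {l m n} X Y.

From HB Require Import structures.
From mathcomp Require Import all_boot all_order all_algebra.
From mathcomp Require Import all_classical all_reals all_analysis.
From mathcomp Require Import lra.
Import Order.TTheory GRing.Theory Num.Theory.
Local Open Scope classical_set_scope.
Local Open Scope ring_scope.

(* Over an integral data set every constraint on the translation [d] is of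
   the form [d <= c] with [c] an integer, so the set of admissible [d] is
   closed under rounding up.  It contains [0] (the point itself lies in the
   hull) and is bounded above (by an input coordinate for [D_in], by the
   largest output in some coordinate for [D_out]); such a set attains its
   supremum at its largest natural number. *)

Lemma ereal_sup_ceil_closed (R : realType) (S : set R) (B : nat) :
  S 0 -> (forall d, S d -> d <= B%:R) ->
  (forall d, S d -> S (Num.ceil d)%:~R) ->
  exists N : nat, ereal_sup [set d%:E | d in S] = N%:R%:E.
Proof.
move=> S0 SB S_ceil.
pose P n := `[< S n%:R >].
have exP : exists n, P n by exists 0%N; apply/asboolP.
have ubP i : P i -> (i <= B)%N by move=> /asboolP /SB; rewrite ler_nat.
case: (ex_maxnP exP ubP) => N /asboolP SN maxN.
have le_N d : S d -> d <= N%:R.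
  move=> Sd; apply: (le_trans (ceil_ge d)).
  have := S_ceil d Sd; case: (Num.ceil d) => [c Sc | c _].
    by rewrite ler_nat; apply: maxN; apply/asboolP.
  by rewrite NegzE mulrNz (le_trans _ (ler0n _ _)) // oppr_le0 ler0n.
exists N; apply/le_anti/andP; split.
  by apply: ge_ereal_sup => _ [d Sd <-]; rewrite lee_fin le_N.
by apply: ereal_sup_ubound; exists N%:R.
Qed.

Lemma ceil_le_natB (R : archiRealDomainType) (d : R) (a b : nat) :
  d <= a%:R - b%:R -> (Num.ceil d)%:~R <= a%:R - b%:R :> R.
Proof.
have -> : a%:R - b%:R = (a%:Z - b%:Z)%:~R :> R by rewrite rmorphB.
by rewrite ler_int ceil_le_int.
Qed.

Lemma FDHP (R : realType) (m n : nat) (A : set (('I_m -> R) * ('I_n -> R)))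
    (x : 'I_m -> R) (y : 'I_n -> R) :
  FDH A (x, y) <->
  (exists2 a, A a & (forall i, a.1 i <= x i) /\ (forall j, y j <= a.2 j))
  /\ nonnegv x /\ nonnegv y.
Proof.
split.
  move=> [[a [Aa [u [v [u_ge0 [v_ge0 [-> ->]]]]]]] x_ge0].
  split=> //; exists a => //; split=> [i | j] /=.
    by rewrite lerDl.
  by rewrite gerBl.
move=> [[a Aa [ax ya]] x_ge0]; split=> //; exists a; split=> //.
exists (fun i => x i - a.1 i), (fun j => a.2 j - y j).
split; first by move=> i; rewrite subr_ge0.
split; first by move=> j; rewrite subr_ge0.
by congr pair; apply: funext => k /=; lra.
Qed.

Section IntegralDataset.
Variables (R : realType) (l m n : nat).
Variables (X : 'I_l -> 'I_m -> nat) (Y : 'I_l -> 'I_n -> nat).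

Lemma FDH_datasetP (x : 'I_m -> R) (y : 'I_n -> R) :
  FDH (dataset R X Y) (x, y) <->
  exists k, (forall i, (X k i)%:R <= x i) /\ (forall j, 0 <= y j <= (Y k j)%:R).
Proof.
rewrite FDHP; split.
  move=> [[_ [k ->] [xk yk]] [_ y_ge0]].
  by exists k; split=> // j; rewrite y_ge0 yk.
move=> [k [xk yk]]; split.
  by exists (ptx R X k, pty R Y k); [exists k | split=> // j; case/andP: (yk j)].
split=> [i | j]; last by case/andP: (yk j).
exact: le_trans (ler0n _ _) (xk i).
Qed.

Lemma dataset_in_FDH (k : 'I_l) : FDH (dataset R X Y) (ptx R X k, pty R Y k).
Proof. by apply/FDH_datasetP; exists k; split=> // j; rewrite ler0n /=. Qed.

Variable kbar : 'I_l.

Lemma D_in_dataset_nat : (0 < m)%N ->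
  exists N : nat,
    D_in (ptx R X kbar) (pty R Y kbar) (FDH (dataset R X Y)) = N%:R%:E.
Proof.
move=> m_gt0; pose i0 := Ordinal m_gt0.
apply: (@ereal_sup_ceil_closed _ _ (X kbar i0)).
- rewrite /= (_ : (fun i => _) = ptx R X kbar); first exact: dataset_in_FDH.
  by apply: funext => i; rewrite subr0.
- move=> d /FDH_datasetP [k [xk _]]; have := xk i0.
  by rewrite /ptx; have := ler0n R (X k i0); lra.
- move=> d /FDH_datasetP [k [xk yk]]; apply/FDH_datasetP; exists k.
  split=> // i; have := xk i; rewrite /ptx => dk.
  have : (Num.ceil d)%:~R <= (X kbar i)%:R - (X k i)%:R :> R.
    by apply: ceil_le_natB; lra.
  lra.
Qed.

Lemma D_out_dataset_nat : (0 < n)%N ->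
  exists N : nat,
    D_out (ptx R X kbar) (pty R Y kbar) (FDH (dataset R X Y)) = N%:R%:E.
Proof.
move=> n_gt0; pose j0 := Ordinal n_gt0.
apply: (@ereal_sup_ceil_closed _ _ (\max_(k < l) Y k j0)%N).
- rewrite /= (_ : (fun j => _) = pty R Y kbar); first exact: dataset_in_FDH.
  by apply: funext => j; rewrite addr0.
- move=> d /FDH_datasetP [k [_ yk]]; have /andP[_] := yk j0.
  have : (Y k j0 <= \max_(k < l) Y k j0)%N by apply: leq_bigmax.
  by rewrite -(ler_nat R) /pty; have := ler0n R (Y kbar j0); lra.
- move=> d /FDH_datasetP [k [xk yk]]; apply/FDH_datasetP; exists k.
  split=> // j; have /andP[] := yk j; rewrite /pty => d_lb d_ub.
  have ceil_ub : (Num.ceil d)%:~R <= (Y k j)%:R - (Y kbar j)%:R :> R.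
    by apply: ceil_le_natB; lra.
  have := ceil_ge d; rewrite /=; move=> ceil_lb; apply/andP; split; lra.
Qed.

End IntegralDataset.

Theorem mainTheorem9 (R : realType) (m n l : nat) (hm : (0 < m)%N) (hn : (0 < n)%N)
    (X : 'I_l -> 'I_m -> nat) (Y : 'I_l -> 'I_n -> nat) (kbar : 'I_l) :
  (exists N : nat, D_in (ptx R X kbar) (pty R Y kbar) (FDH (dataset R X Y)) = (N%:R)%:E) /\
  (exists N : nat, D_out (ptx R X kbar) (pty R Y kbar) (FDH (dataset R X Y)) = (N%:R)%:E).
Proof. by split; [apply: D_in_dataset_nat | apply: D_out_dataset_nat]. Qed.
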